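(* Let $V$ be a commutative unital quantale whose underlying lattice is a frame and in which $k=\top$. Then the category $\mathsf{VGrp}$ is unital if and only if $V$ is a frame as a quantale, i.e. $\otimes=\wedge$.
   Context: A commutative unital quantale $V$ is a complete lattice (top $\top$, bottom $\bot$) with a commutative associative operation $\otimes$ with unit $k$ preserving arbitrary joins in each variable (including the empty join). A $V$-category $(X,a)$ is a set with $a\colon X\times X\to V$, $k\le a(x,x)$, $a(x,x')\otimes a(x',x'')\le a(x,x'')$. A $V$-group $(X,a,+)$ is a $V$-category with a group structure (additive notation, not necessarily abelian) such that $a(x_1,x_2)\otimes a(x_1',x_2')\le a(x_1+x_1',x_2+x_2')$; morphisms ($V$-homomorphisms) are group homomorphisms $f$ with $a(x,x')\le b(f(x),f(x'))$. This gives the category $\mathsf{VGrp}$, which is pointed and finitely complete when $k=\top$; the product of $(X,a)$ and $(Y,b)$ is $X\times Y$ with $(a\wedge b)((x,y),(x',y'))=a(x,x')\wedge b(y,y')$. A pair of morphisms with common codomain is jointly strongly epimorphic if whenever both factor through a monomorphism $m$, $m$ is an isomorphism. A pointed finitely complete category is unital if for all objects $X,Y$ the morphisms $\langle 1,0\rangle\colon X\to X\times Y$ and $\langle 0,1\rangle\colon Y\to X\times Y$ are jointly strongly epimorphic. *)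

Set Implicit Arguments.
Unset Strict Implicit.

Record quantale := Quantale {
  qcar :> Type;
  qle : qcar -> qcar -> Prop;
  qle_refl : forall x, qle x x;
  qle_trans : forall x y z, qle x y -> qle y z -> qle x z;
  qle_antisym : forall x y, qle x y -> qle y x -> x = y;
  qsup : (qcar -> Prop) -> qcar;
  qsup_ub : forall (S : qcar -> Prop) x, S x -> qle x (qsup S);
  qsup_least : forall (S : qcar -> Prop) y, (forall x, S x -> qle x y) -> qle (qsup S) y;
  qten : qcar -> qcar -> qcar;
  qk : qcar;
  qten_assoc : forall x y z, qten x (qten y z) = qten (qten x y) z;
  qten_comm : forall x y, qten x y = qten y x;
  qten_k : forall x, qten qk x = x;
  (* preservation of arbitrary (incl. empty) joins; by commutativity in each variable *)
  qten_sup : forall x (S : qcar -> Prop),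
      qten x (qsup S) = qsup (fun y => exists s, S s /\ y = qten x s)
}.

Arguments qle {q}. Arguments qsup {q}. Arguments qten {q}. Arguments qk {q}.

Definition qtop {V : quantale} : V := qsup (fun _ => True).
Definition qbot {V : quantale} : V := qsup (fun _ => False).
Definition qmeet {V : quantale} (x y : V) : V := qsup (fun z => qle z x /\ qle z y).

Definition lattice_is_frame (V : quantale) : Prop :=
  forall (x : V) (S : V -> Prop),
    qmeet x (qsup S) = qsup (fun y => exists s, S s /\ y = qmeet x s).

Definition tensor_is_meet (V : quantale) : Prop :=
  forall x y : V, qten x y = qmeet x y.

Lemma qmeet_lb1 (V : quantale) (x y : V) : qle (qmeet x y) x.
Proof. apply qsup_least. intros z [H _]; exact H. Qed.
Lemma qmeet_lb2 (V : quantale) (x y : V) : qle (qmeet x y) y.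
Proof. apply qsup_least. intros z [_ H]; exact H. Qed.
Lemma qmeet_glb (V : quantale) (x y z : V) : qle z x -> qle z y -> qle z (qmeet x y).
Proof. intros; apply qsup_ub; split; assumption. Qed.

Lemma qten_monor (V : quantale) (c a b : V) : qle a b -> qle (qten c a) (qten c b).
Proof.
  intros Hab.
  assert (E : b = qsup (fun y => y = a \/ y = b)).
  { apply qle_antisym.
    - apply qsup_ub; right; reflexivity.
    - apply qsup_least; intros y [->| ->]; [exact Hab | apply qle_refl]. }
  rewrite E, qten_sup. apply qsup_ub. exists a; split; [left; reflexivity | reflexivity].
Qed.

Lemma qten_mono (V : quantale) (a b c d : V) :
  qle a b -> qle c d -> qle (qten a c) (qten b d).
Proof.
  intros H1 H2. apply qle_trans with (qten a d); [apply qten_monor; exact H2|].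
  rewrite (qten_comm a d), (qten_comm b d). apply qten_monor; exact H1.
Qed.

Record VGroup (V : quantale) := MkVGroup {
  vcar :> Type;
  vadd : vcar -> vcar -> vcar;
  vzero : vcar;
  vopp : vcar -> vcar;
  vadd_assoc : forall x y z, vadd x (vadd y z) = vadd (vadd x y) z;
  vadd_0l : forall x, vadd vzero x = x;
  vadd_0r : forall x, vadd x vzero = x;
  vadd_oppl : forall x, vadd (vopp x) x = vzero;
  vadd_oppr : forall x, vadd x (vopp x) = vzero;
  vdist : vcar -> vcar -> V;
  vdist_refl : forall x, qle qk (vdist x x);
  vdist_trans : forall x y z, qle (qten (vdist x y) (vdist y z)) (vdist x z);
  vdist_add : forall x1 x2 y1 y2,
      qle (qten (vdist x1 x2) (vdist y1 y2)) (vdist (vadd x1 y1) (vadd x2 y2))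
}.

Arguments vadd {V v}. Arguments vzero {V v}. Arguments vopp {V v}. Arguments vdist {V v}.

Definition is_vhom {V : quantale} (X Y : VGroup V) (f : X -> Y) : Prop :=
  (forall x x', f (vadd x x') = vadd (f x) (f x')) /\
  (forall x x', qle (vdist x x') (vdist (f x) (f x'))).

Definition is_mono {V : quantale} (M Z : VGroup V) (m : M -> Z) : Prop :=
  is_vhom m /\
  forall (W : VGroup V) (g h : W -> M), is_vhom g -> is_vhom h ->
    (forall w, m (g w) = m (h w)) -> forall w, g w = h w.

Definition is_iso {V : quantale} (M Z : VGroup V) (m : M -> Z) : Prop :=
  is_vhom m /\ exists n : Z -> M, is_vhom n /\
    (forall x, n (m x) = x) /\ (forall z, m (n z) = z).

Definition jointly_strongly_epi {V : quantale} (X Y Z : VGroup V)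
  (f : X -> Z) (g : Y -> Z) : Prop :=
  forall (M : VGroup V) (m : M -> Z) (f' : X -> M) (g' : Y -> M),
    is_mono m -> is_vhom f' -> is_vhom g' ->
    (forall x, m (f' x) = f x) -> (forall y, m (g' y) = g y) ->
    is_iso m.

Section Product.
Variables (V : quantale) (X Y : VGroup V).

Let padd (p q : X * Y) : X * Y := (vadd (fst p) (fst q), vadd (snd p) (snd q)).
Let pdist (p q : X * Y) : V := qmeet (vdist (fst p) (fst q)) (vdist (snd p) (snd q)).

Definition prodVG : VGroup V.
Proof.
  refine (@MkVGroup V (X * Y)%type padd (vzero, vzero) (fun p => (vopp (fst p), vopp (snd p)))
            _ _ _ _ _ pdist _ _ _); unfold padd, pdist.
  - intros [] [] []; simpl; rewrite !vadd_assoc; reflexivity.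
  - intros []; simpl; rewrite !vadd_0l; reflexivity.
  - intros []; simpl; rewrite !vadd_0r; reflexivity.
  - intros []; simpl; rewrite !vadd_oppl; reflexivity.
  - intros []; simpl; rewrite !vadd_oppr; reflexivity.
  - intros []; simpl; apply qmeet_glb; apply vdist_refl.
  - intros [] [] []; simpl; apply qmeet_glb.
    + eapply qle_trans; [|apply vdist_trans]; apply qten_mono; apply qmeet_lb1.
    + eapply qle_trans; [|apply vdist_trans]; apply qten_mono; apply qmeet_lb2.
  - intros [] [] [] []; simpl; apply qmeet_glb.
    + eapply qle_trans; [|apply vdist_add]; apply qten_mono; apply qmeet_lb1.
    + eapply qle_trans; [|apply vdist_add]; apply qten_mono; apply qmeet_lb2.
Defined.

Definition inl_VG (x : X) : prodVG := (x, vzero).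
Definition inr_VG (y : Y) : prodVG := (vzero, y).

End Product.

Definition VGrp_unital (V : quantale) : Prop :=
  forall X Y : VGroup V, jointly_strongly_epi (@inl_VG V X Y) (@inr_VG V X Y).

(* When k = top the quantale is integral, so x (x) y <= x /\ y always.
   If VGrp is unital, take the two-point groups X, Y with distance x (resp. y)
   between distinct points and equip X x Y with the distance a (x) b: the
   identity onto the product X x Y (distance a /\ b) is a monomorphism through
   which both injections factor, hence an isomorphism, and comparing distances
   between (0,0) and (1,1) gives x /\ y <= x (x) y.
   Conversely, if (x) = /\, monomorphisms are injective (test them against
   their kernel pair), so the images of the two factorizations commute and
   (a, b) |-> f'(a) + g'(b) is an inverse V-homomorphism of the monomorphism. *)
From Stdlib Require Import ProofIrrelevance.
Set Implicit Arguments.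
Unset Strict Implicit.

Lemma qtenACA (V : quantale) (a b c d : V) :
  qten (qten a b) (qten c d) = qten (qten a c) (qten b d).
Proof.
  rewrite <- !qten_assoc. f_equal. rewrite !qten_assoc. f_equal. apply qten_comm.
Qed.

Lemma qle_top (V : quantale) (x : V) : qle x qtop.
Proof. apply qsup_ub; exact I. Qed.

Section IntegralQuantale.
Variable V : quantale.
Hypothesis k_top : qk = qtop :> V.

Lemma qten_top (a : V) : qten a qtop = a.
Proof. rewrite <- k_top, qten_comm; apply qten_k. Qed.

Lemma qten_le_l (a b : V) : qle (qten a b) a.
Proof.
  apply qle_trans with (qten a qtop); [apply qten_monor, qle_top |].
  rewrite qten_top; apply qle_refl.
Qed.

Lemma qten_le_r (a b : V) : qle (qten a b) b.
Proof. rewrite qten_comm; apply qten_le_l. Qed.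

Lemma qten_le_meet (a b : V) : qle (qten a b) (qmeet a b).
Proof. apply qmeet_glb; [apply qten_le_l | apply qten_le_r]. Qed.

End IntegralQuantale.

Section GroupFacts.
Variable V : quantale.

Lemma vaddI (G : VGroup V) (a b c : G) : vadd a b = vadd a c -> b = c.
Proof.
  intros E. apply (f_equal (vadd (vopp a))) in E.
  rewrite !vadd_assoc, vadd_oppl, !vadd_0l in E. exact E.
Qed.

Variables (G H : VGroup V) (f : G -> H).
Hypothesis f_add : forall x x', f (vadd x x') = vadd (f x) (f x').

Lemma vhom0 : f vzero = vzero.
Proof. apply (vaddI (a := f vzero)). rewrite <- f_add, vadd_0l, vadd_0r. reflexivity. Qed.

Lemma vhomN (x : G) : f (vopp x) = vopp (f x).
Proof. apply (vaddI (a := f x)). rewrite <- f_add, !vadd_oppr. exact vhom0. Qed.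

End GroupFacts.

Section SubVGroup.
Variables (V : quantale) (G : VGroup V) (P : G -> Prop).
Hypotheses (P0 : P vzero) (PD : forall x y, P x -> P y -> P (vadd x y))
  (PN : forall x, P x -> P (vopp x)).

Definition subVG : VGroup V.
Proof.
  refine (@MkVGroup V {x : G | P x}
    (fun p q => exist _ (vadd (proj1_sig p) (proj1_sig q)) (PD (proj2_sig p) (proj2_sig q)))
    (exist _ vzero P0)
    (fun p => exist _ (vopp (proj1_sig p)) (PN (proj2_sig p))) _ _ _ _ _
    (fun p q => vdist (proj1_sig p) (proj1_sig q)) _ _ _).
  - intros [] [] []; apply subset_eq_compat, vadd_assoc.
  - intros []; apply subset_eq_compat, vadd_0l.
  - intros []; apply subset_eq_compat, vadd_0r.
  - intros []; apply subset_eq_compat, vadd_oppl.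
  - intros []; apply subset_eq_compat, vadd_oppr.
  - intros []; apply vdist_refl.
  - intros [] [] []; apply vdist_trans.
  - intros [] [] [] []; apply vdist_add.
Defined.

End SubVGroup.

Section KernelPair.
Variables (V : quantale) (M Z : VGroup V) (m : M -> Z).
Hypothesis m_add : forall x x', m (vadd x x') = vadd (m x) (m x').

Definition kernel_pairVG : VGroup V.
Proof.
  refine (@subVG V (prodVG M M) (fun p => m (fst p) = m (snd p)) eq_refl _ _).
  - intros [a b] [c d]; simpl; intros E1 E2. rewrite !m_add, E1, E2. reflexivity.
  - intros [a b]; simpl; intros E. rewrite !(vhomN m_add), E. reflexivity.
Defined.

Lemma kernel_pair_fst_vhom :
  is_vhom (X := kernel_pairVG) (fun p => fst (proj1_sig p)).
Proof. split; [intros [] []; reflexivity | intros [] []; apply qmeet_lb1]. Qed.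

Lemma kernel_pair_snd_vhom :
  is_vhom (X := kernel_pairVG) (fun p => snd (proj1_sig p)).
Proof. split; [intros [] []; reflexivity | intros [] []; apply qmeet_lb2]. Qed.

End KernelPair.

Lemma mono_injective (V : quantale) (M Z : VGroup V) (m : M -> Z) :
  is_mono m -> forall a b, m a = m b -> a = b.
Proof.
  intros [[m_add _] m_mono] a b E.
  exact (m_mono _ _ _ (kernel_pair_fst_vhom m_add) (kernel_pair_snd_vhom m_add)
           (fun p => proj2_sig p) (exist _ (a, b) E)).
Qed.

Lemma injective_vhom_mono (V : quantale) (M Z : VGroup V) (m : M -> Z) :
  is_vhom m -> (forall a b, m a = m b -> a = b) -> is_mono m.
Proof.
  intros m_vhom m_inj. split; [exact m_vhom |].
  intros W g h _ _ E w. exact (m_inj _ _ (E w)).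
Qed.

Section TensorProduct.
Variables (V : quantale) (X Y : VGroup V).

Definition tensorVG : VGroup V.
Proof.
  refine (@MkVGroup V (X * Y)%type
            (fun p q => (vadd (fst p) (fst q), vadd (snd p) (snd q))) (vzero, vzero)
            (fun p => (vopp (fst p), vopp (snd p))) _ _ _ _ _
            (fun p q => qten (vdist (fst p) (fst q)) (vdist (snd p) (snd q))) _ _ _).
  - intros [] [] []; simpl; rewrite !vadd_assoc; reflexivity.
  - intros []; simpl; rewrite !vadd_0l; reflexivity.
  - intros []; simpl; rewrite !vadd_0r; reflexivity.
  - intros []; simpl; rewrite !vadd_oppl; reflexivity.
  - intros []; simpl; rewrite !vadd_oppr; reflexivity.
  - intros []; simpl. rewrite <- (qten_k qk). apply qten_mono; apply vdist_refl.
  - intros [] [] []; simpl. rewrite qtenACA. apply qten_mono; apply vdist_trans.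
  - intros [] [] [] []; simpl. rewrite qtenACA. apply qten_mono; apply vdist_add.
Defined.

Lemma tensor_to_prod_mono (k_top : qk = qtop :> V) :
  is_mono (Z := prodVG X Y) (fun p : tensorVG => p).
Proof.
  apply injective_vhom_mono; [|easy].
  split; [reflexivity | intros [] []; apply qten_le_meet, k_top].
Qed.

End TensorProduct.

Section TwoPointGroup.
Variable V : quantale.
Hypothesis k_top : qk = qtop :> V.

Definition two_dist (a : V) (x y : bool) : V := if xorb x y then a else qtop.

Definition twoVG (a : V) : VGroup V.
Proof.
  refine (@MkVGroup V bool xorb false (fun x => x) _ _ _ _ _ (two_dist a) _ _ _);
    try solve [intros []; reflexivity | intros [] [] []; reflexivity].
  - intros []; unfold two_dist; simpl; rewrite k_top; apply qle_refl.
  - intros [] [] []; unfold two_dist; simpl;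
      first [apply qle_top | apply qten_le_l, k_top | apply qten_le_r, k_top].
  - intros [] [] [] []; unfold two_dist; simpl;
      first [apply qle_top | apply qten_le_l, k_top | apply qten_le_r, k_top].
Defined.

Lemma unital_meet_le_ten : VGrp_unital V -> forall x y : V, qle (qmeet x y) (qten x y).
Proof.
  intros unital x y.
  pose (X := twoVG x); pose (Y := twoVG y).
  assert (inl_vhom : is_vhom (X := X) (Y := tensorVG X Y) (fun a => (a, false))).
  { split; [reflexivity | intros a a'; simpl; rewrite (qten_top k_top); apply qle_refl]. }
  assert (inr_vhom : is_vhom (X := Y) (Y := tensorVG X Y) (fun b => (false, b))).
  { split; [reflexivity | intros b b'; simpl].
    rewrite qten_comm, (qten_top k_top); apply qle_refl. }
  destruct (unital X Y _ _ _ _ (tensor_to_prod_mono X Y k_top) inl_vhom inr_vhom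
              (fun _ => eq_refl) (fun _ => eq_refl)) as [_ [n [[_ n_dist] [n_m _]]]].
  pose proof (n_dist (true, true) (false, false)) as D.
  rewrite (n_m (true, true)), (n_m (false, false)) in D.
  exact D.
Qed.

End TwoPointGroup.

Section JointFactorization.
Variables (V : quantale) (X Y M : VGroup V) (m : M -> prodVG X Y) (f : X -> M) (g : Y -> M).
Hypotheses (m_mono : is_mono m) (f_vhom : is_vhom f) (g_vhom : is_vhom g)
  (mf : forall x, m (f x) = inl_VG Y x) (mg : forall y, m (g y) = inr_VG X y).

Definition copair (p : prodVG X Y) : M := vadd (f (fst p)) (g (snd p)).

Lemma m_copair (p : prodVG X Y) : m (copair p) = p.
Proof.
  destruct p as [a b]. unfold copair; simpl.
  rewrite (proj1 (proj1 m_mono)), mf, mg; simpl. rewrite vadd_0r, vadd_0l. reflexivity.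
Qed.

Lemma copair_m (z : M) : copair (m z) = z.
Proof. apply (mono_injective m_mono), m_copair. Qed.

Lemma f_g_commute (a : X) (b : Y) : vadd (f a) (g b) = vadd (g b) (f a).
Proof.
  apply (mono_injective m_mono). rewrite !(proj1 (proj1 m_mono)), mf, mg; simpl.
  rewrite !vadd_0r, !vadd_0l. reflexivity.
Qed.

Lemma copair_vhom : tensor_is_meet V -> is_vhom copair.
Proof.
  intros ten_meet. split.
  - intros [a b] [a' b']; unfold copair; simpl.
    rewrite (proj1 f_vhom), (proj1 g_vhom), <- !vadd_assoc. f_equal.
    rewrite !vadd_assoc, f_g_commute. reflexivity.
  - intros [a b] [a' b']; simpl. rewrite <- ten_meet.
    eapply qle_trans; [|apply vdist_add]. apply qten_mono; [apply f_vhom | apply g_vhom].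
Qed.

End JointFactorization.

Lemma tensor_is_meet_unital (V : quantale) : tensor_is_meet V -> VGrp_unital V.
Proof.
  intros ten_meet X Y M m f g m_mono f_vhom g_vhom mf mg.
  split; [exact (proj1 m_mono) |].
  exists (copair f g); split; [|split].
  - exact (copair_vhom m_mono f_vhom g_vhom mf mg ten_meet).
  - exact (copair_m m_mono mf mg).
  - exact (m_copair m_mono mf mg).
Qed.

Unset Implicit Arguments.
Theorem proposition6p1 (V : quantale) :
  lattice_is_frame V -> qk = qtop :> V ->
  (VGrp_unital V <-> tensor_is_meet V).
Proof.
  intros _ k_top. split.
  - intros unital x y. apply qle_antisym.
    + exact (qten_le_meet k_top x y).
    + exact (unital_meet_le_ten k_top unital x y).
  - apply tensor_is_meet_unital.
Qed.
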